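(* Let $A\in\mathbb{C}^{m\times n}$ and $B\in\mathbb{C}^{n\times p}$. Then each of the following sets of matrices is contained in $\{(AB)^{(1,2)}\}$: $$\{(A^{(1,2)}AB)^{(1,2)}A^{(1,2)}\},\quad \{B^{(1,2)}(ABB^{(1,2)})^{(1,2)}\},\quad \{(A^{*}AB)^{(1,2)}A^{*}\},\quad \{B^{*}(ABB^{*})^{(1,2)}\},\quad \{(AA^{*}AB)^{(1,2)}AA^{*}\},$$ $$\{B^{*}B(ABB^{*}B)^{(1,2)}\},\quad \{B^{(1,2)}(A^{(1,2)}ABB^{(1,2)})^{(1,2)}A^{(1,2)}\},\quad \{B^{*}(A^{*}ABB^{*})^{(1,2)}A^{*}\},\quad \{B^{*}B(AA^{*}ABB^{*}B)^{(1,2)}AA^{*}\}.$$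
   Context: For a complex matrix $X$, $X^*$ is its conjugate transpose, $r(X)$ its rank and $\mathscr{R}(X)$ its column space. For $X\in\mathbb{C}^{p\times q}$, a matrix $G\in\mathbb{C}^{q\times p}$ is called an $\{i,\ldots,j\}$-generalized inverse of $X$ (written $X^{(i,\ldots,j)}$) if it satisfies the equations numbered $i,\ldots,j$ among the four Penrose equations (i) $XGX=X$, (ii) $GXG=G$, (iii) $(XG)^*=XG$, (iv) $(GX)^*=GX$; $\{X^{(i,\ldots,j)}\}$ denotes the set of all such $G$. The Moore–Penrose inverse $X^\dagger$ is the unique matrix satisfying all four equations. For a matrix expression involving generalized inverses, $\{\cdot\}$ denotes the set of all values of the expression as each generalized inverse occurring in it ranges over all admissible choices; repeated occurrences of the same symbol (e.g. $A^{(1)}$ appearing twice) denote one and the same choice, and a generalized inverse of a matrix that itself contains a chosen generalized inverse is taken with respect to that chosen matrix. *)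

(* Complex matrices are modelled over an arbitrary
   numClosedFieldType C (e.g. algC, or any model of the complex numbers),
   with conjugation Num.conj. *)
From HB Require Import structures.
From mathcomp Require Import all_boot all_order all_algebra.
Set Implicit Arguments. Unset Strict Implicit. Unset Printing Implicit Defensive.
Import Order.TTheory GRing.Theory Num.Theory.
Local Open Scope ring_scope.

Definition ctmx (C : numClosedFieldType) (p q : nat) (X : 'M[C]_(p, q)) : 'M[C]_(q, p) :=
  map_mx (fun z => z^*) X^T.

Definition is_g12 (C : numClosedFieldType) (p q : nat)
  (X : 'M[C]_(p, q)) (G : 'M[C]_(q, p)) : Prop :=
  X *m G *m X = X /\ G *m X *m G = G.

(* Write M := AB. In every case the candidate is K X L, where X is a {1,2}-inverse
   of L M K for a left factor L (1, A^(1,2), A^H or AA^H) and a right factor K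
   (1, B^(1,2), B^H or B^HB). Equation (ii) for K X L follows from (ii) for X by
   associativity alone. For (i), the identity L M K X L M K = L M K only has to be
   stripped of L on the left and of K on the right; this is possible because each
   such L can be cancelled in front of A (for A^(1,2) since A A^(1,2) A = A, for
   A^H since A^H A Y = 0 forces A Y = 0), and dually each K behind B. *)
From HB Require Import structures.
From mathcomp Require Import all_boot all_order all_algebra.
Import Order.TTheory GRing.Theory Num.Theory.
Local Open Scope ring_scope.

Section Cancellation.
Context {R : pzRingType}.

Definition lcancel_on {k m n} (L : 'M[R]_(k, m)) (A : 'M[R]_(m, n)) :=
  forall r (Y Z : 'M[R]_(n, r)), L *m A *m Y = L *m A *m Z -> A *m Y = A *m Z.

Definition rcancel_on {n p l} (B : 'M[R]_(n, p)) (K : 'M[R]_(p, l)) :=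
  forall r (Y Z : 'M[R]_(r, n)), Y *m B *m K = Z *m B *m K -> Y *m B = Z *m B.

Lemma lcancel_on1 {m n} (A : 'M[R]_(m, n)) : lcancel_on 1%:M A.
Proof. by move=> r Y Z; rewrite !mul1mx. Qed.

Lemma rcancel_on1 {n p} (B : 'M[R]_(n, p)) : rcancel_on B 1%:M.
Proof. by move=> r Y Z; rewrite !mulmx1. Qed.

Lemma lcancel_on_g1 {m n} {A : 'M[R]_(m, n)} {A1 : 'M[R]_(n, m)} :
  A *m A1 *m A = A -> lcancel_on A1 A.
Proof. by move=> AA1A r Y Z eqYZ; rewrite -AA1A -!mulmxA !(mulmxA A1) eqYZ. Qed.

Lemma rcancel_on_g1 {n p} {B : 'M[R]_(n, p)} {B1 : 'M[R]_(p, n)} :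
  B *m B1 *m B = B -> rcancel_on B B1.
Proof. by move=> BB1B r Y Z eqYZ; rewrite -BB1B !mulmxA eqYZ. Qed.

Lemma lcancel_onM {k l m n} {K : 'M[R]_(k, l)} {L : 'M[R]_(l, m)} {A : 'M[R]_(m, n)} :
  lcancel_on K L -> lcancel_on L A -> lcancel_on (K *m L) A.
Proof.
move=> cKL cLA r Y Z eqYZ; apply: cLA; rewrite -!mulmxA; apply: cKL.
by rewrite !mulmxA.
Qed.

Lemma rcancel_onM {n p l k} {B : 'M[R]_(n, p)} {K : 'M[R]_(p, l)} {H : 'M[R]_(l, k)} :
  rcancel_on B K -> rcancel_on K H -> rcancel_on B (K *m H).
Proof.
move=> cBK cKH r Y Z eqYZ; apply: cBK; apply: cKH.
by rewrite !mulmxA in eqYZ.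
Qed.

Lemma lcancel_on_mulmxr {k m n p} {L : 'M[R]_(k, m)} {A : 'M[R]_(m, n)} {B : 'M[R]_(n, p)} :
  lcancel_on L A -> lcancel_on L (A *m B).
Proof. by move=> cLA r Y Z; rewrite !mulmxA -!(mulmxA _ B); apply: cLA. Qed.

Lemma rcancel_on_mulmxl {m n p l} {A : 'M[R]_(m, n)} {B : 'M[R]_(n, p)} {K : 'M[R]_(p, l)} :
  rcancel_on B K -> rcancel_on (A *m B) K.
Proof. by move=> cBK r Y Z; rewrite !mulmxA; apply: cBK. Qed.

Lemma g12_sandwich {k m p l} {L : 'M[R]_(k, m)} {M : 'M[R]_(m, p)} {K : 'M[R]_(p, l)}
    {X : 'M[R]_(l, k)} :
  lcancel_on L M -> rcancel_on M K ->
  L *m M *m K *m X *m (L *m M *m K) = L *m M *m K ->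
  X *m (L *m M *m K) *m X = X ->
  M *m (K *m X *m L) *m M = M /\ K *m X *m L *m M *m (K *m X *m L) = K *m X *m L.
Proof.
move=> cLM cMK eq1 eq2; split.
  have := cMK _ (M *m (K *m X *m L)) 1%:M; rewrite mul1mx; apply.
  rewrite -!mulmxA; apply: cLM.
  by rewrite !mulmxA in eq1 *.
by rewrite -{3}eq2 !mulmxA.
Qed.

End Cancellation.

Section ConjugateTranspose.
Context {C : numClosedFieldType}.

Lemma ctmxK {p q} (M : 'M[C]_(p, q)) : ctmx (ctmx M) = M.
Proof. by apply/matrixP=> i j; rewrite !mxE conjCK. Qed.

Lemma ctmxM {p q r} (P : 'M[C]_(p, q)) (Q : 'M[C]_(q, r)) :
  ctmx (P *m Q) = ctmx Q *m ctmx P.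
Proof. by rewrite /ctmx trmx_mul map_mxM. Qed.

(* The diagonal entry (j, j) of M^H M is the sum of the |M i j|^2. *)
Lemma ctmx_mul_eq0 {p q} {M : 'M[C]_(p, q)} : ctmx M *m M = 0 -> M = 0.
Proof.
move=> /matrixP MM0; apply/matrixP=> i j; rewrite mxE.
move: (MM0 j j); rewrite !mxE => /eqP.
rewrite psumr_eq0 => [/allP/(_ i (mem_index_enum _))|k _].
  by rewrite !mxE mulrC mul_conjC_eq0 => /eqP.
by rewrite !mxE mulrC mul_conjC_ge0.
Qed.

Lemma mul_ctmx_eq0 {p q} {M : 'M[C]_(p, q)} : M *m ctmx M = 0 -> M = 0.
Proof.
move=> MM0; have /(congr1 (@ctmx _ _ _)) : ctmx M = 0.
  by apply: ctmx_mul_eq0; rewrite ctmxK.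
by rewrite ctmxK => ->; apply/matrixP=> i j; rewrite !mxE conjC0.
Qed.

Lemma lcancel_on_ctmx {m n} (A : 'M[C]_(m, n)) : lcancel_on (ctmx A) A.
Proof.
move=> r Y Z eqYZ; apply/eqP; rewrite -subr_eq0 -mulmxBr; apply/eqP/ctmx_mul_eq0.
by rewrite ctmxM -mulmxA (mulmxA (ctmx A)) !mulmxBr eqYZ subrr.
Qed.

Lemma rcancel_on_ctmx {n p} (B : 'M[C]_(n, p)) : rcancel_on B (ctmx B).
Proof.
move=> r Y Z eqYZ; apply/eqP; rewrite -subr_eq0 -mulmxBl; apply/eqP/mul_ctmx_eq0.
by rewrite ctmxM mulmxA !mulmxBl eqYZ subrr.
Qed.

Lemma lcancel_on_mul_ctmx {m n} (A : 'M[C]_(m, n)) : lcancel_on (A *m ctmx A) A.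
Proof.
have cA_AH : lcancel_on A (ctmx A) by have := lcancel_on_ctmx (ctmx A); rewrite ctmxK.
exact: lcancel_onM cA_AH (lcancel_on_ctmx A).
Qed.

Lemma rcancel_on_ctmx_mul {n p} (B : 'M[C]_(n, p)) : rcancel_on B (ctmx B *m B).
Proof.
have cBH_B : rcancel_on (ctmx B) B by have := rcancel_on_ctmx (ctmx B); rewrite ctmxK.
exact: rcancel_onM (rcancel_on_ctmx B) cBH_B.
Qed.

Lemma is_g12_sandwich {k m n p l} {L : 'M[C]_(k, m)} {A : 'M[C]_(m, n)}
    {B : 'M[C]_(n, p)} {K : 'M[C]_(p, l)} {X : 'M[C]_(l, k)} :
  lcancel_on L A -> rcancel_on B K ->
  is_g12 (L *m A *m B *m K) X -> is_g12 (A *m B) (K *m X *m L).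
Proof.
move=> cLA cBK [eq1 eq2]; apply: g12_sandwich.
- exact: lcancel_on_mulmxr.
- exact: rcancel_on_mulmxl.
- by rewrite !mulmxA in eq1 *.
- by rewrite !mulmxA in eq2 *.
Qed.

End ConjugateTranspose.

Theorem theorem3p1 (C : numClosedFieldType) (m n p : nat)
  (A : 'M[C]_(m, n)) (B : 'M[C]_(n, p)) :
  (* 1: (A^(1,2) A B)^(1,2) A^(1,2) *)
  (forall (A1 : 'M[C]_(n, m)) (X : 'M[C]_(p, n)),
     is_g12 A A1 -> is_g12 (A1 *m A *m B) X ->
     is_g12 (A *m B) (X *m A1)) /\
  (* 2: B^(1,2) (A B B^(1,2))^(1,2) *)
  (forall (B1 : 'M[C]_(p, n)) (X : 'M[C]_(n, m)),
     is_g12 B B1 -> is_g12 (A *m B *m B1) X ->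
     is_g12 (A *m B) (B1 *m X)) /\
  (* 3: (A^H A B)^(1,2) A^H *)
  (forall (X : 'M[C]_(p, n)),
     is_g12 (ctmx A *m A *m B) X ->
     is_g12 (A *m B) (X *m ctmx A)) /\
  (* 4: B^H (A B B^H)^(1,2) *)
  (forall (X : 'M[C]_(n, m)),
     is_g12 (A *m B *m ctmx B) X ->
     is_g12 (A *m B) (ctmx B *m X)) /\
  (* 5: (A A^H A B)^(1,2) A A^H *)
  (forall (X : 'M[C]_(p, m)),
     is_g12 (A *m ctmx A *m A *m B) X ->
     is_g12 (A *m B) (X *m A *m ctmx A)) /\
  (* 6: B^H B (A B B^H B)^(1,2) *)
  (forall (X : 'M[C]_(p, m)),
     is_g12 (A *m B *m ctmx B *m B) X ->
     is_g12 (A *m B) (ctmx B *m B *m X)) /\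
  (* 7: B^(1,2) (A^(1,2) A B B^(1,2))^(1,2) A^(1,2) *)
  (forall (A1 : 'M[C]_(n, m)) (B1 : 'M[C]_(p, n)) (X : 'M[C]_(n, n)),
     is_g12 A A1 -> is_g12 B B1 -> is_g12 (A1 *m A *m B *m B1) X ->
     is_g12 (A *m B) (B1 *m X *m A1)) /\
  (* 8: B^H (A^H A B B^H)^(1,2) A^H *)
  (forall (X : 'M[C]_(n, n)),
     is_g12 (ctmx A *m A *m B *m ctmx B) X ->
     is_g12 (A *m B) (ctmx B *m X *m ctmx A)) /\
  (* 9: B^H B (A A^H A B B^H B)^(1,2) A A^H *)
  (forall (X : 'M[C]_(p, m)),
     is_g12 (A *m ctmx A *m A *m B *m ctmx B *m B) X ->
     is_g12 (A *m B) (ctmx B *m B *m X *m A *m ctmx A)).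
Proof.
have cAg A1 : is_g12 A A1 -> lcancel_on A1 A by case=> /lcancel_on_g1.
have cBg B1 : is_g12 B B1 -> rcancel_on B B1 by case=> /rcancel_on_g1.
have c1A := lcancel_on1 A; have cB1 := rcancel_on1 B.
have cAH := lcancel_on_ctmx A; have cBH := rcancel_on_ctmx B.
have cAAH := lcancel_on_mul_ctmx A; have cBHB := rcancel_on_ctmx_mul B.
repeat apply: conj.
- move=> A1 X /cAg cA hX; rewrite -[X]mul1mx.
  by apply: is_g12_sandwich cA cB1 _; rewrite mulmx1.
- move=> B1 X /cBg cB hX; rewrite -[B1 *m X]mulmx1.
  by apply: is_g12_sandwich c1A cB _; rewrite mul1mx.
- move=> X hX; rewrite -[X]mul1mx.
  by apply: is_g12_sandwich cAH cB1 _; rewrite mulmx1.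
- move=> X hX; rewrite -[_ *m X]mulmx1.
  by apply: is_g12_sandwich c1A cBH _; rewrite mul1mx.
- move=> X hX; rewrite -mulmxA -[X]mul1mx.
  by apply: is_g12_sandwich cAAH cB1 _; rewrite mulmx1.
- move=> X hX; rewrite -[_ *m X]mulmx1.
  by apply: is_g12_sandwich c1A cBHB _; rewrite mul1mx mulmxA.
- by move=> A1 B1 X /cAg cA /cBg cB; apply: is_g12_sandwich.
- by move=> X; apply: is_g12_sandwich cAH cBH.
- move=> X hX; rewrite -mulmxA.
  by apply: is_g12_sandwich cAAH cBHB _; rewrite mulmxA.
Qed.
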